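(* Let $B$ be a crystal, $b\in B$ and $b_\mu\in B_S$ such that $\mathrm{wt}(b)+\mathrm{wt}(b_\mu)\in P_+$. Then for every $i\in\{1,\dots,n\}$, $\tilde e_ib_\mu\neq0$ implies $\tilde f_ib\ne0$.
   Context: Let $\mathfrak g$ be of type $D_n$, weights $(\lambda_1,\dots,\lambda_n)$ in an orthonormal basis $\epsilon_j$, simple roots $\alpha_j=\epsilon_j-\epsilon_{j+1}$ ($j<n$), $\alpha_n=\epsilon_{n-1}+\epsilon_n$, $P_+$ the dominant integral weights ($\lambda_j\in\frac12\mathbb Z$, $\lambda_j-\lambda_k\in\mathbb Z$, $\lambda_1\ge\dots\ge\lambda_n$, $\lambda_{n-1}+\lambda_n\ge0$). A crystal means a normal crystal whose connected components are Kashiwara crystals $B_\lambda$ of irreducible $U_q(\mathfrak g)$-modules; in particular $\varepsilon_i(b)=\max\{k:\tilde e_i^kb\ne0\}$, $\varphi_i(b)=\max\{k:\tilde f_i^kb\ne0\}$ and $\varphi_i(b)-\varepsilon_i(b)=\langle\mathrm{wt}(b),\alpha_i^\vee\rangle$. The spinor crystal $B_S$: sign vectors $(i_1,\dots,i_n)$ of weight $\frac12\sum i_j\epsilon_j$; for $j<n$, $\tilde f_j$ turns $(i_j,i_{j+1})=(+,-)$ into $(-,+)$ (else $0$), $\tilde e_j$ the reverse; $\tilde f_n$ turns $(i_{n-1},i_n)=(+,+)$ into $(-,-)$ (else $0$), $\tilde e_n$ the reverse. *)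

From mathcomp Require Import all_boot all_order all_algebra.
Set Implicit Arguments. Unset Strict Implicit. Unset Printing Implicit Defensive.
Import Order.TTheory GRing.Theory Num.Theory.
Local Open Scope ring_scope.

(* Indices: the paper's index i in {1,...,n} is represented by i : 'I_n with
   value i-1; similarly weight coordinates lambda_j are lambda (j-1).
   A weight is a function 'I_n -> rat (coordinates in the basis eps_j). *)

Definition coord (n : nat) (l : 'I_n -> rat) (k : nat) : rat :=
  match insub k with Some j => l j | None => 0 end.

(* <lambda, alpha_i^vee>; type D_n is simply laced, alpha_i^vee = alpha_i.
   0-based i < n-1 : alpha = eps_{i} - eps_{i+1};  i = n-1 : eps_{n-2} + eps_{n-1} *)
Definition pairing (n : nat) (l : 'I_n -> rat) (i : 'I_n) : rat :=
  if (i.+1 < n)%N then coord l i - coord l i.+1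
  else coord l (n - 2)%N + coord l (n - 1)%N.

Definition simple_root (n : nat) (i : 'I_n) : 'I_n -> rat := fun j =>
  if (i.+1 < n)%N then ((val j == val i)%:R - (val j == i.+1)%:R)
  else ((val j == (n - 2)%N)%:R + (val j == (n - 1)%N)%:R).

Definition integral_weight (n : nat) (l : 'I_n -> rat) : Prop :=
  (forall j, 2 * l j \is a Num.int) /\ (forall j k, l j - l k \is a Num.int).

Definition dominant (n : nat) (l : 'I_n -> rat) : Prop :=
  integral_weight l /\
  (forall j k : 'I_n, (val j <= val k)%N -> l k <= l j) /\
  0 <= coord l (n - 2)%N + coord l (n - 1)%N.

Fixpoint iter_opt (B : Type) (g : B -> option B) (k : nat) (b : B) : option B :=
  match k with
  | 0 => Some b
  | k.+1 => obind g (iter_opt g k b)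
  end.

Definition string_len (B : Type) (g : B -> option B) (b : B) (k : nat) : Prop :=
  iter_opt g k b <> None /\ iter_opt g k.+1 b = None.

(* A (seminormal) crystal of type D_n on the carrier B, with weight map wt and
   Kashiwara operators e, f (None standing for 0):
   - e_i b = b' iff f_i b' = b, and wt(e_i b) = wt b + alpha_i;
   - weights are integral;
   - eps_i(b) = max{k : e_i^k b <> 0}, phi_i(b) = max{k : f_i^k b <> 0} exist
     and phi_i(b) - eps_i(b) = <wt b, alpha_i^vee>. *)
Definition normal_crystal (n : nat) (B : Type) (wt : B -> 'I_n -> rat)
    (e f : 'I_n -> B -> option B) : Prop :=
  (forall i b b', e i b = Some b' <-> f i b' = Some b) /\
  (forall i b b', e i b = Some b' -> forall j, wt b' j = wt b j + simple_root i j) /\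
  (forall b, integral_weight (wt b)) /\
  (forall i b, exists eps phi : nat,
     string_len (e i) b eps /\ string_len (f i) b phi /\
     (phi%:R - eps%:R : rat) = pairing (wt b) i).

(* The spinor crystal B_S: sign vectors, true = +, false = - *)
Definition spinor (n : nat) := {ffun 'I_n -> bool}.

Definition sgn (n : nat) (s : spinor n) (k : nat) : bool :=
  match insub k with Some j => s j | None => false end.

Definition spin_wt (n : nat) (s : spinor n) : 'I_n -> rat :=
  fun j => if s j then 1 / 2 else - (1 / 2).

Definition spin_f (n : nat) (i : 'I_n) (s : spinor n) : option (spinor n) :=
  if (i.+1 < n)%N then
    (if sgn s i && ~~ sgn s i.+1 then
       Some [ffun j : 'I_n => if val j == val i then false
                             else if val j == i.+1 then true else s j]
     else None)
  else
    (if sgn s (n - 2)%N && sgn s (n - 1)%N then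
       Some [ffun j : 'I_n => if (val j == (n - 2)%N) || (val j == (n - 1)%N) then false
                             else s j]
     else None).

Definition spin_e (n : nat) (i : 'I_n) (s : spinor n) : option (spinor n) :=
  if (i.+1 < n)%N then
    (if ~~ sgn s i && sgn s i.+1 then
       Some [ffun j : 'I_n => if val j == val i then true
                             else if val j == i.+1 then false else s j]
     else None)
  else
    (if ~~ sgn s (n - 2)%N && ~~ sgn s (n - 1)%N then
       Some [ffun j : 'I_n => if (val j == (n - 2)%N) || (val j == (n - 1)%N) then true
                             else s j]
     else None).

(* If [e_i b_mu <> 0] then [b_mu] has the signs [(-,+)] (resp. [(-,-)]) at the
   relevant positions, so [<wt b_mu, alpha_i^vee> = -1].  Dominance of
   [wt b + wt b_mu] gives [<wt b + wt b_mu, alpha_i^vee> >= 0], hence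
   [phi_i(b) - eps_i(b) = <wt b, alpha_i^vee> >= 1] and [phi_i(b) > 0]. *)
From Pilot Require Import Defs.
From mathcomp Require Import all_boot all_order all_algebra.
From mathcomp Require Import lra.
Set Implicit Arguments. Unset Strict Implicit. Unset Printing Implicit Defensive.
Import Order.TTheory GRing.Theory Num.Theory.
Local Open Scope ring_scope.

(* Unqualified, [coord] would resolve to [vector.coord]. *)
Lemma coordE n (l : 'I_n -> rat) k (hk : (k < n)%N) : Defs.coord l k = l (Ordinal hk).
Proof. by rewrite /Defs.coord insubT. Qed.

Lemma coordD n (l1 l2 : 'I_n -> rat) k :
  Defs.coord (fun j => l1 j + l2 j) k = Defs.coord l1 k + Defs.coord l2 k.
Proof. by rewrite /Defs.coord; case: insub => //; rewrite addr0. Qed.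

Lemma pairingD n (l1 l2 : 'I_n -> rat) i :
  pairing (fun j => l1 j + l2 j) i = pairing l1 i + pairing l2 i.
Proof. by rewrite /pairing !coordD; case: ifP => _; rewrite addrACA // opprD. Qed.

Lemma dominant_pairing_ge0 n (l : 'I_n -> rat) i : dominant l -> 0 <= pairing l i.
Proof.
case=> _ [l_mono l_last]; rewrite /pairing; case: ifP => // hi.
rewrite (coordE _ (ltn_ord i)) (coordE _ hi) subr_ge0.
by apply: l_mono => /=.
Qed.

Lemma coord_spin_wt n (s : spinor n) k : (k < n)%N ->
  Defs.coord (spin_wt s) k = if sgn s k then 1 / 2 else - (1 / 2).
Proof. by move=> hk; rewrite (coordE _ hk) /sgn insubT. Qed.

Lemma spin_e_pairing n (i : 'I_n) (s : spinor n) :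
  spin_e i s <> None -> pairing (spin_wt s) i = -1.
Proof.
have n_gt0 : (0 < n)%N by apply: leq_ltn_trans (ltn_ord i).
rewrite /spin_e /pairing; case: ifP => hi.
  case: ifP => // /andP[/negbTE s_i s_i1] _.
  by rewrite !coord_spin_wt // s_i s_i1; lra.
case: ifP => // /andP[/negbTE s_n2 /negbTE s_n1] _.
have n1_lt : (n - 1 < n)%N by rewrite ltn_subrL n_gt0.
have n2_lt : (n - 2 < n)%N by rewrite ltn_subrL n_gt0.
by rewrite !coord_spin_wt // s_n2 s_n1; lra.
Qed.

Lemma iter_opt_None (B : Type) (g : B -> option B) b k :
  g b = None -> iter_opt g k.+1 b = None.
Proof. by move=> gb; elim: k => [|k IH] //=; rewrite -/(iter_opt g k.+1 b) IH. Qed.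

Lemma normal_crystal_f_neq0 n (B : Type) (wt : B -> 'I_n -> rat)
    (e f : 'I_n -> B -> option B) i b :
  normal_crystal wt e f -> 0 < pairing (wt b) i -> f i b <> None.
Proof.
case=> _ [_ [_ strings]] pairing_gt0 fb.
have [eps [[|phi] [_ [[f_phi _] phi_eps]]]] := strings i b.
  by move: pairing_gt0; rewrite -phi_eps sub0r oppr_gt0 ltNge ler0n.
exact/f_phi/iter_opt_None.
Qed.

Theorem lemma4p5 (n : nat) (hn : (2 <= n)%N)
  (B : Type) (wt : B -> 'I_n -> rat) (e f : 'I_n -> B -> option B)
  (HB : normal_crystal wt e f)
  (b : B) (bmu : spinor n)
  (Hdom : dominant (fun j => wt b j + spin_wt bmu j)) :
  forall i : 'I_n, spin_e i bmu <> None -> f i b <> None.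
Proof.
move=> i e_bmu; apply: normal_crystal_f_neq0 HB _.
have := dominant_pairing_ge0 i Hdom.
rewrite pairingD spin_e_pairing //; lra.
Qed.
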